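(* Let $A$ be a connected monounary algebra and $a\in A$ with $A'=\{a\}$. If $A$ contains no cycle and the subalgebra $A\setminus P(a)$ is not isomorphic to $Z$, then there is $B\in\mathbf R(A)\cap\mathcal S^{(1)}$ such that $\mathbf V(A)=\mathbf V(B,E)$.
   Context: A monounary algebra is a pair $(A,f)$ with $A$ a nonempty set and $f:A\to A$; a partial monounary algebra allows $f$ to be partial. Direct products are coordinatewise. It is connected if for all $x,y$ there are $m,n\ge0$ with $f^m(x)=f^n(y)$; it contains a cycle if $f^k(x)=x$ for some $x$, $k\ge1$. A retract of $A$ is a nonempty subalgebra $M$ such that there is an endomorphism $h:A\to M$ with $h|_M=\mathrm{id}$; $\mathbf R(A)$ is the class of algebras isomorphic to a retract of $A$. A retract variety is a class closed under isomorphisms, retracts and direct products; $\mathbf V(\mathcal K)$ is the smallest retract variety containing $\mathcal K$, $\mathbf V(B,E)=\mathbf V(\{B,E\})$. For $x\in A$: $f^{-1}(x)=\{y:f(y)=x\}$, $f^{-n}(x)=\bigcup_{z\in f^{-(n-1)}(x)}f^{-1}(z)$, $P(x)=\{x\}\cup\bigcup_{n\ge1}f^{-n}(x)$, regarded as a partial monounary algebra with $f$ restricted to those $y\in P(x)$ with $f(y)\in P(x)$. $A^{(\infty)}$ is the set of $x\in A$ admitting $x_0=x,x_1,\dots$ with $f(x_n)=x_{n-1}$ for $n\ge1$; $A'=\{x\in A\setminus A^{(\infty)}: f(x)\in A^{(\infty)}\}$. Condition ($\bigstar$) on $(A,f)$: whenever $x_1,x_2,x_3\in A$ with $f(x_1)=f(x_2)=f(x_3)$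 and $P(x_1),P(x_2),P(x_3)$ pairwise isomorphic, then $|\{x_1,x_2,x_3\}|\le2$. $\mathcal U^\bigstar_c$ is the class of connected monounary algebras satisfying ($\bigstar$). $Z=(\mathbb Z,k\mapsto k+1)$; for $n\in\mathbb N$, $\underline n=(\mathbb Z_n,k\mapsto k+1\bmod n)$; $E$ has universe $\mathbb Z\cup\{(k,1):k\in\mathbb N\}$ with $f(k)=k+1$ on $\mathbb Z$, $f((k,1))=(k-1,1)$ for $k>1$, $f((1,1))=0$; $\widehat n$ has universe $\mathbb Z_n\cup\{(k,1):k\in\mathbb N\}$ with $f(k)=k+1\bmod n$ on $\mathbb Z_n$, $f((k,1))=(k-1,1)$ for $k>1$, $f((1,1))=0$. $\mathcal S^{(0)}$ is the class of algebras isomorphic to $Z$, $E$, or to $\underline n$ or $\widehat n$ for some $n\in\mathbb N$; $\mathcal S^{(1)}$ is the class of $A\in\mathcal U^\bigstar_c$ for which there is $a\in A$ with $A'=\{a\}$ and the subalgebra $A\setminus P(a)$ in $\mathcal S^{(0)}$. *)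

From Stdlib Require Import ZArith.
From mathcomp Require Import all_boot.
Set Implicit Arguments.
Unset Strict Implicit.
Unset Printing Implicit Defensive.

(* A (total) monounary algebra: a carrier with a unary operation.
   Nonemptiness is imposed where the paper needs it (retracts, classes). *)
Record alg := Alg { carrier :> Type; act : carrier -> carrier }.
Arguments act {a} _.

Definition hom (A B : alg) (h : A -> B) : Prop :=
  forall x : A, h (act x) = act (h x).

Definition iso (A B : alg) : Prop :=
  exists (h : A -> B) (g : B -> A),
    hom h /\ hom g /\ (forall x, g (h x) = x) /\ (forall y, h (g y) = y).

Definition closed (A : alg) (M : A -> Prop) : Prop :=
  forall x, M x -> M (act x).

Definition sub_alg (A : alg) (M : A -> Prop) (Hc : closed M) : alg :=
  @Alg {x : A | M x} (fun x => exist _ (act (proj1_sig x)) (Hc _ (proj2_sig x))).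

Definition in_R (X Y : alg) : Prop :=
  exists (M : X -> Prop) (Hc : closed M),
    (exists x, M x) /\
    (exists h : X -> X, hom h /\ (forall x, M (h x)) /\ (forall x, M x -> h x = x)) /\
    iso Y (sub_alg Hc).

Definition prod_alg (I : Type) (F : I -> alg) : alg :=
  @Alg (forall i, F i) (fun g i => act (g i)).

Definition retract_variety (C : alg -> Prop) : Prop :=
  (forall X, C X -> inhabited X) /\
  (forall X Y, C X -> iso X Y -> C Y) /\
  (forall X Y, C X -> in_R X Y -> C Y) /\
  (forall (I : Type) (F : I -> alg), inhabited I -> (forall i, C (F i)) -> C (prod_alg F)).

Definition Vgen (K : alg -> Prop) (X : alg) : Prop :=
  forall C, retract_variety C -> (forall Y, K Y -> C Y) -> C X.

Definition V1 (A : alg) : alg -> Prop := Vgen (fun Y => Y = A).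
Definition V2 (B E : alg) : alg -> Prop := Vgen (fun Y => Y = B \/ Y = E).

Definition connected (A : alg) : Prop :=
  forall x y : A, exists m n, iter m act x = iter n act y.

Definition has_cycle (A : alg) : Prop :=
  exists (x : A) (k : nat), 1 <= k /\ iter k act x = x.

Definition P (A : alg) (x : A) (y : A) : Prop := exists n, iter n act y = x.

(* isomorphism of the partial monounary algebras P(x1) and P(x2)
   (f restricted to those y in P(x) with f(y) in P(x)) *)
Definition P_iso (A : alg) (x1 x2 : A) : Prop :=
  exists phi psi : A -> A,
    (forall y, P x1 y -> P x2 (phi y)) /\
    (forall y, P x2 y -> P x1 (psi y)) /\
    (forall y, P x1 y -> psi (phi y) = y) /\
    (forall y, P x2 y -> phi (psi y) = y) /\
    (forall y, P x1 y -> (P x1 (act y) <-> P x2 (act (phi y)))) /\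
    (forall y, P x1 y -> P x1 (act y) -> phi (act y) = act (phi y)) /\
    (forall y, P x2 y -> P x2 (act y) -> psi (act y) = act (psi y)).

Definition Ainf (A : alg) (x : A) : Prop :=
  exists s : nat -> A, s 0 = x /\ forall n, act (s n.+1) = s n.

Definition Aprime (A : alg) (x : A) : Prop := ~ Ainf x /\ Ainf (act x).

Definition star (A : alg) : Prop :=
  forall x1 x2 x3 : A, act x1 = act x2 -> act x2 = act x3 ->
    P_iso x1 x2 -> P_iso x1 x3 -> P_iso x2 x3 ->
    x1 = x2 \/ x1 = x3 \/ x2 = x3.

Definition U_star_c (A : alg) : Prop := connected A /\ star A.

Lemma compl_P_closed (A : alg) (a : A) : closed (fun y => ~ P a y).
Proof.
move=> y Hy [n Hn]; apply: Hy; exists n.+1; by rewrite iterSr.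
Qed.

Definition compl_alg (A : alg) (a : A) : alg := sub_alg (@compl_P_closed A a).

(* the algebras Z, E, n-cycles, hat n  (n = m.+1 >= 1) *)
Definition Zalg : alg := @Alg Z Z.succ.

(* (k,1), k >= 1, is encoded as inr (k-1) *)
Definition Ealg : alg :=
  @Alg (Z + nat)%type (fun x => match x with
                               | inl k => inl (Z.succ k)
                               | inr 0 => inl 0%Z
                               | inr (S k) => inr k
                               end).

Definition cyc (m : nat) : alg := @Alg 'I_m.+1 (@ordS m.+1).

Definition hat (m : nat) : alg :=
  @Alg ('I_m.+1 + nat)%type (fun x => match x with
                                     | inl i => inl (ordS i)
                                     | inr 0 => inl ord0
                                     | inr (S k) => inr k
                                     end).

Definition S0 (X : alg) : Prop :=
  iso X Zalg \/ iso X Ealg \/ exists m : nat, iso X (cyc m) \/ iso X (hat m).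

Definition S1 (X : alg) : Prop :=
  U_star_c X /\
  exists a : X, (forall x, Aprime x <-> x = a) /\ S0 (@compl_alg X a).

From Pilot Require Import Defs.
From Stdlib Require Import ZArith Lia Classical ClassicalEpsilon.
From Stdlib Require Import FunctionalExtensionality PropExtensionality ProofIrrelevance.
From mathcomp Require Import all_boot zify.
Set Implicit Arguments.
Unset Strict Implicit.
Unset Printing Implicit Defensive.

(* Since A' = {a}, A splits into P(a) and A^(infty) = A \ P(a), and in a
   connected acyclic algebra every element has a well-defined level (signed
   distance from f(a)).  The retract B keeps, inside P(a), one representative
   of each bisimilarity class of siblings, and collapses A^(infty) onto a
   single line through f(a): x in P(a) is sent to a canonical bisimilar copy,
   y in A^(infty) to the point of the line of the same level.  Siblings of B
   off the line are then pairwise non-bisimilar, which gives (star), and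
   B \ P(a) is a copy of Z.
   As A^(infty) is not Z it branches: two distinct preimages u, v of one point
   both have infinite backward chains, and A retracts onto the copy of E they
   span by folding along P(v).
   Conversely x |-> (reduce x, (fold along P(j)) x)_j embeds A into B x E^A,
   and the embedding has a retraction: a point of the product that reaches the
   image after n steps, at the image of y, goes to the point n steps below y
   described by its B-coordinate. *)

Lemma ex_minimal (Q : nat -> Prop) :
  (exists n, Q n) -> exists n, Q n /\ forall m, m < n -> ~ Q m.
Proof.
move=> [n Qn]; elim: n {-2}n (leqnn n) Qn => [|k IH] n le_nk Qn.
  by exists n; split=> // m; lia.
case: (classic (exists m, m < n /\ Q m)) => [[m [lt_mn Qm]]|no_smaller].
  by apply: (IH m) => //; lia.
by exists n; split=> // m lt_mn Qm; apply: no_smaller; exists m.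
Qed.

Lemma sig_val_inj (T : Type) (Q : T -> Prop) (u v : {x | Q x}) :
  proj1_sig u = proj1_sig v -> u = v.
Proof. by apply: eq_sig_hprop => x; apply: proof_irrelevance. Qed.

Lemma pigeonhole2 (T : Type) (u v x1 x2 x3 : T) :
  x1 = u \/ x1 = v -> x2 = u \/ x2 = v -> x3 = u \/ x3 = v ->
  x1 = x2 \/ x1 = x3 \/ x2 = x3.
Proof. by do 3 case=> ->; auto. Qed.

Lemma iter_act (A : alg) (x : A) n : iter n act (act x) = act (iter n act x).
Proof. by elim: n => //= n ->. Qed.

Lemma iter_sub_alg (A : alg) (M : A -> Prop) (Hc : Defs.closed M) (x : sub_alg Hc) n :
  proj1_sig (iter n act x) = iter n act (proj1_sig x).
Proof. by elim: n => //= n ->. Qed.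

Lemma iter_prod_alg (I : Type) (F : I -> alg) (d : prod_alg F) n i :
  iter n act d i = iter n act (d i).
Proof. by elim: n => //= n ->. Qed.

Lemma P_refl (A : alg) (x : A) : P x x.
Proof. by exists 0. Qed.

Lemma P_child (A : alg) (p x y : A) : P p x -> act y = x -> P p y.
Proof. by move=> [n Hn] E; exists n.+1; rewrite iterSr E. Qed.

Lemma P_act (A : alg) (p x : A) : P p x -> x <> p -> P p (act x).
Proof. by move=> [[|n] Hn] //= _; exists n; rewrite -iterSr. Qed.

Lemma Ainf_act (A : alg) (x : A) : Ainf x -> Ainf (act x).
Proof.
move=> [s [s0 Hs]]; exists (fun n => if n is k.+1 then s k else act x).
by split=> // -[|n] /=; rewrite ?s0 ?Hs.
Qed.

Lemma Ainf_iter (A : alg) (x : A) n : Ainf x -> Ainf (iter n act x).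
Proof. by move=> Ix; elim: n => //= n; apply: Ainf_act. Qed.

Lemma Ainf_chain (A : alg) (s : nat -> A) :
  (forall n, act (s n.+1) = s n) -> forall n, Ainf (s n).
Proof. by move=> Hs n; exists (fun k => s (k + n)); split=> // k; rewrite addSn Hs. Qed.

Lemma iter_chain (A : alg) (s : nat -> A) :
  (forall n, act (s n.+1) = s n) -> forall n, iter n act (s n) = s 0.
Proof. by move=> Hs; elim=> //= n IH; rewrite -iterS iterSr Hs IH. Qed.

Definition chain (A : alg) (x : A) : nat -> A :=
  epsilon (inhabits (fun _ => x)) (fun s => s 0 = x /\ forall n, act (s n.+1) = s n).

Lemma chainP (A : alg) (x : A) :
  Ainf x -> chain x 0 = x /\ forall n, act (chain x n.+1) = chain x n.
Proof. exact: epsilon_spec. Qed.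

Definition line (A : alg) (base : A) (s : nat -> A) (z : Z) : A :=
  if (0 <=? z)%Z then iter (Z.to_nat z) act base else s (Z.to_nat (- z)).

Lemma line_opp (A : alg) (base : A) (s : nat -> A) :
  s 0 = base -> forall n, line base s (- Z.of_nat n) = s n.
Proof.
move=> s0 [|n]; first by rewrite /line /= s0.
by rewrite /line; case: (Z.leb_spec0 0 _) => H; [lia | rewrite Z.opp_involutive Nat2Z.id].
Qed.

Lemma line_succ (A : alg) (base : A) (s : nat -> A) :
  s 0 = base -> (forall n, act (s n.+1) = s n) ->
  forall z, line base s (z + 1) = act (line base s z).
Proof.
move=> s0 Hs z; rewrite /line.
case: (Z.leb_spec0 0 z) => Hz; case: (Z.leb_spec0 0 (z + 1)) => Hz1; try lia.
- by rewrite (_ : Z.to_nat (z + 1) = (Z.to_nat z).+1) //; lia.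
- have -> : z = (-1)%Z by lia.
  by rewrite /= -s0 -Hs.
- have -> : Z.to_nat (- z) = (Z.to_nat (- (z + 1))).+1 by lia.
  by rewrite Hs.
Qed.

Section FirstHit.
Variables (X : alg) (G : X -> Prop).

Definition hits (d : X) : Prop := exists n, G (iter n act d).

Definition first_hit (d : X) (n : nat) : Prop :=
  G (iter n act d) /\ forall m, m < n -> ~ G (iter m act d).

Definition hit_time (d : X) : nat := epsilon (inhabits 0) (first_hit d).

Lemma hit_timeP (d : X) : hits d -> first_hit d (hit_time d).
Proof. by move=> /ex_minimal Hmin; apply: epsilon_spec. Qed.

Lemma hit_time_eq (d : X) n : first_hit d n -> hit_time d = n.
Proof.
move=> [Gn min_n]; have [Gh min_h] := hit_timeP (ex_intro _ n Gn).
by case: (ltngtP (hit_time d) n) => // [/min_n | /min_h].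
Qed.

Lemma hit_time_succ (d : X) n : hits d -> hit_time d = n.+1 ->
  hits (act d) /\ hit_time (act d) = n.
Proof.
move=> /hit_timeP + Ed; rewrite Ed => -[Gn min_n].
have Gn' : G (iter n act (act d)) by rewrite iterSr in Gn.
split; first by exists n.
by apply: hit_time_eq; split=> // m lt_mn; rewrite -iterSr; apply: min_n.
Qed.

Lemma hits_act (d : X) : hits (act d) -> hits d.
Proof. by move=> [n Gn]; exists n.+1; rewrite iterSr. Qed.

End FirstHit.

(** * Bisimilarity of principal subtrees *)

Section Bisimulation.
Variable A : alg.

(* Bisimilarity for the converse of [act]: it compares the subtrees P(x), P(y). *)
Definition bisim (x y : A) : Prop :=
  exists R : A -> A -> Prop, R x y /\
    forall u v, R u v ->
      (forall u1, act u1 = u -> exists v1, act v1 = v /\ R u1 v1) /\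
      (forall v1, act v1 = v -> exists u1, act u1 = u /\ R u1 v1).

Lemma bisim_refl (x : A) : bisim x x.
Proof. by exists eq; split=> // u _ <-; split=> w Hw; exists w. Qed.

Lemma bisim_sym (x y : A) : bisim x y -> bisim y x.
Proof.
move=> [R [Rxy HR]]; exists (fun u v => R v u); split=> // u v /HR [fwd bwd].
split=> [u1 /bwd|v1 /fwd] [w [Ew Rw]]; by exists w.
Qed.

Lemma bisim_trans (x y z : A) : bisim x y -> bisim y z -> bisim x z.
Proof.
move=> [R [Rxy HR]] [Q [Qyz HQ]].
exists (fun u w => exists v, R u v /\ Q v w); split; first by exists y.
move=> u w [v [/HR [fwdR bwdR] /HQ [fwdQ bwdQ]]]; split.
  move=> u1 /fwdR [v1 [/fwdQ [w1 [Ew1 Q1]] R1]]; exists w1; split=> //; by exists v1.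
move=> w1 /bwdQ [v1 [/bwdR [u1 [Eu1 R1]] Q1]]; exists u1; split=> //; by exists v1.
Qed.

Lemma bisim_child (x y u : A) : bisim x y -> act u = x -> exists v, act v = y /\ bisim u v.
Proof.
move=> [R [Rxy HR]] /(proj1 (HR _ _ Rxy)) [v [Ev Rv]].
by exists v; split=> //; exists R.
Qed.

Definition canon (x : A) : A :=
  epsilon (inhabits x) (fun u => act u = act x /\ bisim u x).

Lemma canonP (x : A) : act (canon x) = act x /\ bisim (canon x) x.
Proof.
apply: (epsilon_spec (inhabits x) (fun u => act u = act x /\ bisim u x)).
by exists x; split=> //; apply: bisim_refl.
Qed.

Lemma canon_congr (x y : A) : act x = act y -> bisim x y -> canon x = canon y.
Proof.
move=> Exy Bxy; rewrite /canon (proof_irrelevance _ (inhabits x) (inhabits y)).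
congr epsilon; apply: functional_extensionality => u.
apply: propositional_extensionality; rewrite Exy.
split=> -[Eu Bu]; split=> //; [exact: bisim_trans Bu Bxy | exact: bisim_trans Bu (bisim_sym Bxy)].
Qed.

Lemma canon_idem (x : A) : canon (canon x) = canon x.
Proof. by have [E B] := canonP x; apply: canon_congr. Qed.

(* Given [bisim p q] and z at depth n in P(p), [transport nf q n z] is a
   bisimilar copy of z at depth n in P(q), chosen top-down; at each step [nf]
   may replace the chosen element by a bisimilar sibling. *)
Fixpoint transport (nf : A -> A) (q : A) (n : nat) (z : A) : A :=
  if n is m.+1 then
    nf (epsilon (inhabits q) (fun u => act u = transport nf q m (act z) /\ bisim z u))
  else q.

Section Transport.
Variables (nf : A -> A) (p q : A).
Hypothesis nfP : forall u, act (nf u) = act u /\ bisim (nf u) u.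
Hypothesis Bpq : bisim p q.

Lemma transport_stepP n z : bisim (act z) (transport nf q n (act z)) ->
  act (transport nf q n.+1 z) = transport nf q n (act z) /\ bisim z (transport nf q n.+1 z).
Proof.
move=> B1 /=; set u := epsilon _ _.
have [Eu Bu] : act u = transport nf q n (act z) /\ bisim z u.
  apply: (epsilon_spec (inhabits q) (fun u => act u = transport nf q n (act z) /\ bisim z u)).
  by have [v [Ev Bv]] := bisim_child B1 (erefl (act z)); exists v.
have [Enf Bnf] := nfP u.
by rewrite Enf; split=> //; apply: bisim_trans Bu (bisim_sym Bnf).
Qed.

Lemma transportP n z : iter n act z = p ->
  bisim z (transport nf q n z) /\ iter n act (transport nf q n z) = q.
Proof.
elim: n z => [|n IH] z Hz; first by rewrite /= in Hz *; rewrite Hz.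
have [B1 I1] : bisim (act z) (transport nf q n (act z)) /\
               iter n act (transport nf q n (act z)) = q by apply: IH; rewrite -iterSr.
have [E2 B2] := transport_stepP B1.
by split=> //; rewrite iterSr E2.
Qed.

Lemma transport_act n z : iter n.+1 act z = p ->
  act (transport nf q n.+1 z) = transport nf q n (act z).
Proof.
rewrite iterSr => /transportP [B1 _].
exact: (proj1 (transport_stepP B1)).
Qed.

End Transport.
End Bisimulation.

Section Acyclic.
Variable A : alg.
Hypothesis acyc : ~ has_cycle A.

Lemma iter_inj (x : A) p q : iter p act x = iter q act x -> p = q.
Proof.
wlog lt_pq : p q / p < q => [W E|E].
  by case: (ltngtP p q) => // /W; [apply | move=> /(_ (esym E))].
case: acyc; exists (iter p act x), (q - p); split; first lia.
by rewrite -iterD subnK ?E // ltnW.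
Qed.

Lemma notP_act (x : A) : ~ P x (act x).
Proof. by move=> [n Hn]; apply: acyc; exists x, n.+1; rewrite iterSr. Qed.

Definition depth (p x : A) : nat := epsilon (inhabits 0) (fun n => iter n act x = p).

Lemma depthP (p x : A) : P p x -> iter (depth p x) act x = p.
Proof. exact: epsilon_spec. Qed.

Lemma depth_eq (p x : A) n : iter n act x = p -> depth p x = n.
Proof. by move=> H; apply: (iter_inj (x := x)); rewrite H depthP //; exists n. Qed.

Lemma P_iso_bisim (x1 x2 : A) : P_iso x1 x2 -> bisim x1 x2.
Proof.
move=> [phi [psi [P12 [P21 [psiK [phiK [Pact [phi_act _]]]]]]]].
have phi_x1 : phi x1 = x2.
  have [[|n] Hn] := P12 _ (P_refl x1) => //; case: (@notP_act x1).
  by apply/(Pact _ (P_refl x1)); exists n; rewrite -iterSr.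
exists (fun u v => P x1 u /\ v = phi u); split; first by rewrite phi_x1; split=> //; apply: P_refl.
move=> u _ [Pu ->]; split=> [u1 Eu1|v1 Ev1].
  have Pu1 := P_child Pu Eu1.
  by exists (phi u1); split=> //; rewrite -Eu1 phi_act // Eu1.
have Pv1 := P_child (P12 _ Pu) Ev1; have Pu1 := P21 _ Pv1.
have Pau1 : P x1 (act (psi v1)) by apply/(Pact _ Pu1); rewrite phiK // Ev1; apply: P12.
exists (psi v1); split; last by rewrite phiK.
by rewrite -(psiK _ Pau1) phi_act // phiK // Ev1 psiK.
Qed.

End Acyclic.

(** * Levels in a connected acyclic algebra *)

Section Levels.
Variables (A : alg) (o : A).
Hypotheses (conn : connected A) (acyc : ~ has_cycle A).

Definition level (x : A) : Z :=
  let mn := epsilon (inhabits (0, 0)) (fun mn => iter mn.1 act x = iter mn.2 act o) in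
  (Z.of_nat mn.2 - Z.of_nat mn.1)%Z.

Lemma level_spec (x : A) m n : iter m act x = iter n act o -> level x = (Z.of_nat n - Z.of_nat m)%Z.
Proof.
move=> Hmn; rewrite /level.
set mn := epsilon _ _; have : iter mn.1 act x = iter mn.2 act o.
  apply: (epsilon_spec _ (fun mn => iter mn.1 act x = iter mn.2 act o)).
  by have [m' [n' E]] := conn x o; exists (m', n').
case: mn => p q /= Hpq.
have : iter (p + n) act o = iter (m + q) act o.
  by rewrite iterD -Hmn -iterD addnC iterD Hpq -iterD.
move/(iter_inj acyc); lia.
Qed.

Lemma level_base : level o = 0%Z.
Proof. by rewrite (@level_spec o 0 0). Qed.

Lemma level_iter (x : A) k : level (iter k act x) = (level x + Z.of_nat k)%Z.
Proof.
have [m [n E]] := conn x o.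
rewrite (level_spec E) (@level_spec _ m (n + k)); first lia.
by rewrite -iterD addnC iterD E -iterD addnC.
Qed.

Lemma level_act (x : A) : level (act x) = (level x + 1)%Z.
Proof. exact: (level_iter x 1). Qed.

Lemma level_eq_iter (x y : A) m n : iter m act x = iter n act y ->
  (level x + Z.of_nat m = level y + Z.of_nat n)%Z.
Proof. by move=> E; rewrite -!level_iter E. Qed.

Lemma level_line (base : A) (s : nat -> A) :
  s 0 = base -> (forall n, act (s n.+1) = s n) ->
  forall z, level (line base s z) = (level base + z)%Z.
Proof.
move=> s0 Hs z; rewrite /line; case: (Z.leb_spec0 0 z) => Hz.
  by rewrite level_iter; lia.
have := @level_eq_iter (s (Z.to_nat (- z))) base (Z.to_nat (- z)) 0.
by rewrite iter_chain // s0 => /(_ erefl); lia.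
Qed.

End Levels.

Lemma in_R_of_section (X Y : alg) (e : Y -> X) (r : X -> Y) :
  inhabited Y -> hom e -> hom r -> (forall y, r (e y) = y) -> in_R X Y.
Proof.
move=> [y0] He Hr eK.
pose M := fun x : X => exists y, x = e y.
have Mc : Defs.closed M by move=> x [y ->]; exists (act y); rewrite He.
exists M, Mc; split; first by exists (e y0), y0.
split.
  exists (fun x => e (r x)); split; first by move=> x; rewrite Hr He.
  by split=> [x|x [y ->]]; [exists (r x) | rewrite eK].
exists (fun y => exist M (e y) (ex_intro _ y erefl) : sub_alg Mc).
exists (fun x : sub_alg Mc => r (proj1_sig x)).
split; first by move=> y; apply: sig_val_inj => /=; rewrite He.
split; first by move=> [x Mx] /=; rewrite Hr.
split; first by move=> y /=; rewrite eK.
by move=> [x [y Hx]]; apply: sig_val_inj => /=; rewrite Hx eK.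
Qed.

Lemma inhabited_retract_variety : retract_variety (fun X : alg => inhabited X).
Proof.
split=> //; split; first by move=> X Y [x] [h _]; constructor; exact: h x.
split; first by move=> X Y _ [M [Mc [[x Mx] [_ [h [g _]]]]]]; constructor; exact: g (exist _ x Mx).
move=> I F _ inhF; constructor.
by apply: (fun i => epsilon (inhF i) (fun _ => True)).
Qed.

Lemma Vgen_retract_variety (K : alg -> Prop) :
  (forall Y, K Y -> inhabited Y) -> retract_variety (Vgen K).
Proof.
move=> inhK; split; first by move=> X VX; exact: VX _ inhabited_retract_variety inhK.
split; first by move=> X Y VX XY C HC KC; apply: HC.2.1 (VX C HC KC) XY.
split; first by move=> X Y VX XY C HC KC; apply: HC.2.2.1 (VX C HC KC) XY.
by move=> I F inhI VF C HC KC; apply: HC.2.2.2 => // i; apply: VF.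
Qed.

Lemma V1_in_R (A B : alg) : in_R A B -> V1 A B.
Proof. by move=> AB C HC KC; apply: HC.2.2.1 (KC A erefl) AB. Qed.

Lemma V2_in_R_prod (B E X : alg) (I : Type) (F : I -> alg) :
  inhabited I -> (forall i, F i = B \/ F i = E) -> in_R (prod_alg F) X -> V2 B E X.
Proof.
move=> inhI FBE FX C HC KC; apply: HC.2.2.1 FX.
by apply: HC.2.2.2 => // i; apply: KC.
Qed.

Lemma V1_eq_V2 (A B E : alg) : inhabited A -> inhabited B -> inhabited E ->
  V1 A B -> V1 A E -> V2 B E A -> forall X, V1 A X <-> V2 B E X.
Proof.
move=> iA iB iE VB VE VA X; split=> VX.
  by apply: VX => [|Y ->//]; apply: Vgen_retract_variety => Y [->|->].
by apply: VX => [|Y [->|->]//]; apply: Vgen_retract_variety => Y ->.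
Qed.

Section Coordinates.
Variables (A : alg) (o : A).
Hypotheses (conn : connected A) (acyc : ~ has_cycle A).

(* Folds A onto E along the branch through [j]: P(j) goes to the tail of E by
   depth, everything else to the line by level. *)
Definition coord (j x : A) : Ealg :=
  if excluded_middle_informative (P j x) then inr (depth j x)
  else inl (level o x - level o j - 1)%Z.

Lemma coord_P (j x : A) n : iter n act x = j -> coord j x = inr n.
Proof.
move=> Hn; rewrite /coord.
case: excluded_middle_informative => [Px|NP] /=; last by case: NP; exists n.
by rewrite (depth_eq acyc Hn).
Qed.

Lemma coord_notP (j x : A) : ~ P j x -> coord j x = inl (level o x - level o j - 1)%Z.
Proof. by rewrite /coord; case: excluded_middle_informative. Qed.

Lemma coord_eq0 (j x : A) : coord j x = inr 0 -> x = j.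
Proof.
rewrite /coord; case: excluded_middle_informative => // Px [E].
by have := depthP Px; rewrite E.
Qed.

Lemma coord_hom (j : A) : hom (coord j).
Proof.
move=> x; case: (classic (P j x)) => [Px|NPx].
  case: (depth j x) (depthP Px) => [|n] Dx.
    rewrite /= in Dx; subst j.
    rewrite (coord_notP (@notP_act _ acyc x)) (coord_P (n := 0)) // level_act //=.
    by congr inl; lia.
  by rewrite (coord_P Dx) (coord_P (n := n)) // -iterSr.
have NPax : ~ P j (act x) by move=> Pax; apply: NPx; apply: P_child Pax _.
rewrite (coord_notP NPx) (coord_notP NPax) level_act //=.
by congr inl; rewrite /Z.succ; lia.
Qed.

End Coordinates.

(** * The retract B *)

Section Reduction.
Variables (A : alg) (a : A).
Hypotheses (conn : connected A) (apr : forall x : A, Aprime x <-> x = a)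
  (acyc : ~ has_cycle A).

Local Notation level := (level (act a)).

Lemma Ainf_act_a : Ainf (act a).
Proof. by have [_] := proj2 (apr a) erefl. Qed.

Lemma Ainf_notP (x : A) : Ainf x -> ~ P a x.
Proof.
move=> Ix [n Hn]; have [NIa _] := proj2 (apr a) erefl.
by apply: NIa; rewrite -Hn; apply: Ainf_iter.
Qed.

Lemma notP_Ainf (x : A) : ~ P a x -> Ainf x.
Proof.
move=> NPx; have [m [n Emn]] := conn x a.
have /ex_minimal [[|k] [Ik min_k]] : exists k, Ainf (iter k act x) => //.
  case: n Emn => [|n] Emn; first by case: NPx; exists m.
  by exists m.+1; rewrite iterS Emn -iter_act; apply: Ainf_iter Ainf_act_a.
have Ak : Aprime (iter k act x) by split; [apply: min_k | rewrite -iterS].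
by case: NPx; exists k; apply/apr.
Qed.

Definition axis (k : Z) : A := line (act a) (chain (act a)) k.

Lemma axis_succ k : axis (k + 1) = act (axis k).
Proof. by have [c0 cS] := chainP Ainf_act_a; apply: line_succ. Qed.

Lemma level_axis k : level (axis k) = k.
Proof. by have [c0 cS] := chainP Ainf_act_a; rewrite level_line // level_base. Qed.

Lemma Ainf_axis k : Ainf (axis k).
Proof.
have [c0 cS] := chainP Ainf_act_a; rewrite /axis /line.
by case: (0 <=? k)%Z; [apply: Ainf_iter Ainf_act_a | apply: Ainf_chain].
Qed.

Lemma notP_axis k : ~ P a (axis k).
Proof. exact: Ainf_notP (Ainf_axis k). Qed.

Definition canon_path (x : A) : Prop :=
  P a x /\ forall k, k < depth a x -> canon (iter k act x) = iter k act x.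

Lemma canon_path_base : canon_path a.
Proof. by split=> [|k]; [apply: P_refl | rewrite (@depth_eq _ acyc _ _ 0)]. Qed.

Lemma canon_path_act (x : A) : canon_path x -> x <> a -> canon_path (act x).
Proof.
move=> [Px can_x] Nxa; have Pax := P_act Px Nxa.
have Dx : depth a x = (depth a (act x)).+1 by apply: (depth_eq acyc); rewrite iterSr depthP.
by split=> // k lt_k; rewrite -iterSr; apply: can_x; rewrite Dx.
Qed.

Lemma canon_path_fixed (x : A) : canon_path x -> x <> a -> canon x = x.
Proof.
move=> [Px can_x] Nxa; apply: (can_x 0).
by case: (depth a x) (depthP Px) => //= Ex; case: Nxa.
Qed.

Local Notation canonize := (transport (@canon A) a).

Lemma canonizeP n (y : A) : iter n act y = a ->
  bisim y (canonize n y) /\ iter n act (canonize n y) = a.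
Proof. exact: (transportP (@canonP A) (bisim_refl a)). Qed.

Lemma canonize_act n (y : A) : iter n.+1 act y = a ->
  act (canonize n.+1 y) = canonize n (act y).
Proof. exact: (transport_act (@canonP A) (bisim_refl a)). Qed.

Lemma canon_path_canonize n (y : A) : iter n act y = a -> canon_path (canonize n y).
Proof.
elim: n y => [|n IH] y Hy; first exact: canon_path_base.
have Hy' : iter n act (act y) = a by rewrite -iterSr.
have [_ It] := canonizeP Hy; have [_ It'] := canonizeP Hy'.
have Eact := canonize_act Hy.
split; first by exists n.+1.
rewrite (depth_eq acyc It) => -[_|k lt_k]; first by rewrite /= canon_idem.
by rewrite iterSr Eact; apply: (IH _ Hy').2; rewrite (depth_eq acyc It').
Qed.

Lemma canonize_id n (y : A) : iter n act y = a -> canon_path y -> canonize n y = y.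
Proof.
elim: n y => [|n IH] y Hy can_y; first by rewrite /= in Hy.
have Hy' : iter n act (act y) = a by rewrite -iterSr.
have Nya : y <> a by move=> Eya; subst y; apply: (@notP_act _ acyc a); exists n.
have [B1 _] := canonizeP Hy; have Eact := canonize_act Hy.
rewrite IH // in Eact; last exact: canon_path_act.
have -> : canonize n.+1 y = canon (canonize n.+1 y) by rewrite /= canon_idem.
by rewrite (canon_congr Eact (bisim_sym B1)) canon_path_fixed.
Qed.

Definition reduce (x : A) : A :=
  if excluded_middle_informative (P a x) then canonize (depth a x) x else axis (level x).

Lemma reduce_P (x : A) : P a x -> reduce x = canonize (depth a x) x.
Proof. by rewrite /reduce; case: excluded_middle_informative. Qed.

Lemma reduce_notP (x : A) : ~ P a x -> reduce x = axis (level x).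
Proof. by rewrite /reduce; case: excluded_middle_informative. Qed.

Lemma reduce_hom : hom reduce.
Proof.
move=> x; case: (classic (P a x)) => [Px|NPx].
  rewrite (reduce_P Px); case Dx: (depth a x) (depthP Px) => [|n] Hx.
    rewrite /= in Hx; subst x.
    by rewrite reduce_notP ?level_base //; apply: notP_act.
  have Hax : iter n act (act x) = a by rewrite -iterSr.
  rewrite (reduce_P (ex_intro _ n Hax)) (depth_eq acyc Hax).
  by rewrite (canonize_act Hx).
have NPax : ~ P a (act x) by move=> Pax; apply: NPx; apply: P_child Pax _.
by rewrite !reduce_notP // level_act // axis_succ.
Qed.

Lemma bisim_reduce (x : A) : P a x -> bisim x (reduce x).
Proof. by move=> Px; rewrite (reduce_P Px); apply: (canonizeP (depthP Px)).1. Qed.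

Lemma canon_path_reduce (x : A) : P a x -> canon_path (reduce x).
Proof. by move=> Px; rewrite (reduce_P Px); apply: canon_path_canonize (depthP Px). Qed.

Definition reduced (x : A) : Prop := canon_path x \/ exists k, x = axis k.

Lemma reduced_closed : Defs.closed reduced.
Proof.
move=> x [can_x|[k ->]]; last by right; exists (k + 1)%Z; rewrite axis_succ.
case: (classic (x = a)) => [->|Nxa]; last by left; apply: canon_path_act.
by right; exists 0%Z.
Qed.

Lemma reduced_reduce (x : A) : reduced (reduce x).
Proof.
case: (classic (P a x)) => [Px|NPx]; first by left; apply: canon_path_reduce.
by right; exists (level x); rewrite reduce_notP.
Qed.

Lemma reduce_id (x : A) : reduced x -> reduce x = x.
Proof.
move=> [[Px can_x]|[k ->]]; last by rewrite reduce_notP ?level_axis //; apply: notP_axis.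
by rewrite (reduce_P Px) canonize_id //; apply: depthP.
Qed.

Lemma reduced_child (x : A) : reduced x -> P a (act x) -> canon_path x.
Proof. by move=> [//|[k ->]]; rewrite -axis_succ => /notP_axis. Qed.

Lemma reduced_child_axis (x : A) k : reduced x -> act x = axis k -> x = a \/ x = axis (k - 1).
Proof.
move=> [[Px _]|[j ->]] Ek.
  by left; apply: NNPP => Nxa; apply: (@notP_axis k); rewrite -Ek; apply: P_act.
right; congr axis; have := level_axis (j + 1); rewrite axis_succ Ek level_axis; lia.
Qed.

Lemma canon_path_act_neq (x : A) : canon_path (act x) -> x <> a.
Proof. by move=> [Pax _] Exa; rewrite Exa in Pax; apply: (@notP_axis 0). Qed.

Definition B : alg := sub_alg reduced_closed.

Definition reduce_B (x : A) : B := exist _ (reduce x) (reduced_reduce x).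

Lemma reduce_B_hom : hom reduce_B.
Proof. by move=> x; apply: sig_val_inj; apply: reduce_hom. Qed.

Lemma in_R_B : in_R A B.
Proof.
apply: (@in_R_of_section A B (fun y => proj1_sig y) reduce_B).
- by constructor; exact: reduce_B a.
- by [].
- exact: reduce_B_hom.
- by move=> [x Rx]; apply: sig_val_inj; apply: reduce_id.
Qed.

Definition a_B : B := exist _ a (or_introl canon_path_base).

Definition axis_B (k : Z) : B := exist reduced (axis k) (or_intror (ex_intro _ k erefl)).

Lemma axis_B_succ k : axis_B (k + 1) = act (axis_B k).
Proof. by apply: sig_val_inj; apply: axis_succ. Qed.

Lemma connected_B : connected B.
Proof.
move=> x y; have [m [n E]] := conn (proj1_sig x) (proj1_sig y).
by exists m, n; apply: sig_val_inj; rewrite !iter_sub_alg.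
Qed.

Lemma acyclic_B : ~ has_cycle B.
Proof.
move=> [x [k [k_gt0 E]]]; apply: acyc; exists (proj1_sig x), k; split=> //.
by rewrite -iter_sub_alg E.
Qed.

Lemma P_B (y : B) : P a_B y <-> P a (proj1_sig y).
Proof.
by split=> -[n Hn]; exists n; [rewrite -iter_sub_alg Hn | apply: sig_val_inj; rewrite iter_sub_alg].
Qed.

Lemma Ainf_B (x : B) : Ainf x <-> exists k, proj1_sig x = axis k.
Proof.
split=> [[s [s0 Hs]]|[k Ek]].
  have Ix : Ainf (proj1_sig x).
    by exists (fun n => proj1_sig (s n)); split=> [|n]; [rewrite s0 | rewrite -(Hs n)].
  case: x s0 Ix => x [[Px can_x]|[k Ek]] _ Ix; last by exists k.
  by case: (Ainf_notP Ix).
exists (fun n => axis_B (k - Z.of_nat n)); split.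
  by apply: sig_val_inj; rewrite /= Ek Z.sub_0_r.
move=> n; rewrite -axis_B_succ; congr axis_B; lia.
Qed.

Lemma Aprime_B (x : B) : Aprime x <-> x = a_B.
Proof.
split=> [[NIx /Ainf_B [k Ek]]|->].
  apply: sig_val_inj; case: (reduced_child_axis (proj2_sig x) Ek) => // Ex.
  by case: NIx; apply/Ainf_B; exists (k - 1)%Z.
split; first by move=> /Ainf_B [k Ek]; apply: (@notP_axis k); rewrite -Ek; apply: P_refl.
by apply/Ainf_B; exists 0%Z.
Qed.

Lemma compl_B_iso_Z : iso (@compl_alg B a_B) Zalg.
Proof.
have NPaxis k : ~ P a_B (axis_B k) by move=> /P_B; apply: notP_axis.
exists (fun y : compl_alg a_B => level (proj1_sig (proj1_sig y)) : Zalg).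
exists (fun k : Zalg => exist _ (axis_B k) (NPaxis k) : compl_alg a_B).
split; first by move=> y; rewrite /= level_act.
split; first by move=> k; do 2 apply: sig_val_inj; rewrite /= -axis_succ.
split=> [[[x [[Px can_x]|[k Ek]]] NPx]|k]; last exact: level_axis.
  by case: NPx; apply/P_B.
by do 2 apply: sig_val_inj; rewrite /= Ek level_axis.
Qed.

(* Children in A of a canonical element are matched, through [reduce], by
   its children in B. *)
Lemma bisim_B_val (u v : B) : canon_path (proj1_sig u) -> canon_path (proj1_sig v) ->
  bisim u v -> bisim (proj1_sig u) (proj1_sig v).
Proof.
pose R (s t : A) := exists s' t' : B, [/\ canon_path (proj1_sig s'), canon_path (proj1_sig t'),
  bisim s (proj1_sig s'), bisim s' t' & bisim t (proj1_sig t')].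
have R_sym s t : R s t -> R t s.
  by move=> [x [y [Cx Cy Bux Bxy Bvy]]]; exists y, x; split=> //; apply: bisim_sym.
have R_fwd s t : R s t -> forall s1, act s1 = s -> exists t1, act t1 = t /\ R s1 t1.
  move=> [x [y [Cx Cy Bux Bxy Bvy]]] s1 /(bisim_child Bux) [c [Ec Bc]].
  have Pc : P a c := P_child Cx.1 Ec.
  have Ec' : act (reduce_B c) = x.
    by apply: sig_val_inj; rewrite /= -reduce_hom Ec reduce_id //; left.
  have [d [Ed Bd]] := bisim_child Bxy Ec'.
  have Ed' : act (proj1_sig d) = proj1_sig y by rewrite -Ed.
  have Cd : canon_path (proj1_sig d).
    by apply: reduced_child (proj2_sig d) _; rewrite Ed'; apply: Cy.1.
  have [e [Ee Be]] := bisim_child (bisim_sym Bvy) Ed'.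
  exists e; split=> //; exists (reduce_B c), d; split=> //.
  - exact: canon_path_reduce.
  - exact: bisim_trans Bc (bisim_reduce Pc).
  - exact: bisim_sym.
move=> Cu Cv Buv; exists R; split; first by exists u, v; split=> //; apply: bisim_refl.
move=> s t Rst; split; first exact: R_fwd.
move=> t1 /(R_fwd _ _ (R_sym _ _ Rst)) [s1 [Es1 Rs1]].
by exists s1; split=> //; apply: R_sym.
Qed.

Lemma star_B : star B.
Proof.
move=> x1 x2 x3 E12 E23 I12 I13 I23.
have E12' : act (proj1_sig x1) = act (proj1_sig x2) := f_equal (@proj1_sig _ _) E12.
have E13' : act (proj1_sig x1) = act (proj1_sig x3) := f_equal (@proj1_sig _ _) (etrans E12 E23).
case: (reduced_closed (proj2_sig x1)) => [Cx|[k Ek]].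
  have Cx1 := reduced_child (proj2_sig x1) Cx.1.
  have Cx2 : canon_path (proj1_sig x2).
    by apply: reduced_child (proj2_sig x2) _; rewrite -E12'; apply: Cx.1.
  have Bx := bisim_B_val Cx1 Cx2 (P_iso_bisim acyclic_B I12).
  have N1 : proj1_sig x1 <> a := canon_path_act_neq Cx.
  have N2 : proj1_sig x2 <> a by apply: canon_path_act_neq; rewrite -E12'.
  left; apply: sig_val_inj.
  by rewrite -(canon_path_fixed Cx1 N1) -(canon_path_fixed Cx2 N2) (canon_congr E12' Bx).
have sib (x : B) : act (proj1_sig x) = axis k -> x = a_B \/ x = axis_B (k - 1).
  by move=> /(reduced_child_axis (proj2_sig x)) [] Ex; [left | right]; apply: sig_val_inj.
by apply: pigeonhole2 (sib _ _) (sib _ _) (sib _ _); rewrite -?E12' -?E13'.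
Qed.

Lemma S1_B : S1 B.
Proof.
split; first by split; [apply: connected_B | apply: star_B].
by exists a_B; split; [apply: Aprime_B | left; apply: compl_B_iso_Z].
Qed.

(** * E is a retract of A *)

Lemma Ainf_same_level :
  (forall u v : A, act u = act v -> Ainf u -> Ainf v -> u = v) ->
  forall x y : A, Ainf x -> Ainf y -> level x = level y -> x = y.
Proof.
move=> no_branch x y Ix Iy Exy; have [m [n Emn]] := conn x y.
have := level_eq_iter (act a) conn acyc Emn; rewrite Exy => /Z.add_reg_l /Nat2Z.inj Enm.
subst n; have /ex_minimal [[|i] [Ei min_i]] : exists k, iter k act x = iter k act y by exists m.
  by [].
by case: (min_i i) => //; apply: no_branch; rewrite -?iterS //; apply: Ainf_iter.
Qed.

Lemma branching : ~ iso (@compl_alg A a) Zalg ->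
  exists u v : A, [/\ u <> v, act u = act v, Ainf u & Ainf v].
Proof.
move=> NI; apply: NNPP => no_branch; apply: NI.
have {}no_branch (u v : A) : act u = act v -> Ainf u -> Ainf v -> u = v.
  by move=> Euv Iu Iv; apply: NNPP => Nuv; apply: no_branch; exists u, v.
exists (fun y : compl_alg a => level (proj1_sig y) : Zalg).
exists (fun k : Zalg => exist _ (axis k) (@notP_axis k) : compl_alg a).
split; first by move=> y; rewrite /= level_act.
split; first by move=> k; apply: sig_val_inj; rewrite /= -axis_succ.
split=> [[x NPx]|k]; last exact: level_axis.
apply: sig_val_inj; apply: Ainf_same_level => //=.
- exact: Ainf_axis.
- exact: notP_Ainf.
- exact: level_axis.
Qed.

Lemma in_R_E : ~ iso (@compl_alg A a) Zalg -> in_R A Ealg.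
Proof.
move=> /branching [u [v [Nuv Euv Iu Iv]]].
have [cu0 cuS] := chainP Iu; have [cv0 cvS] := chainP Iv.
pose lu := line u (chain u).
pose e (y : Ealg) : A := match y with inl z => lu (z + 1)%Z | inr n => chain v n end.
apply: (@in_R_of_section A Ealg e (coord (act a) v)).
- by constructor; exact: inl 0%Z.
- case=> [z|[|n]] /=; last by rewrite cvS.
    by rewrite /lu -line_succ // /Z.succ.
  by rewrite cv0 -Euv /lu /line.
- exact: coord_hom.
case=> [z|n] /=; last by apply: coord_P => //; rewrite iter_chain // cv0.
have Luv : level u = level v by have := level_eq_iter (act a) conn acyc (m := 1) (n := 1) Euv; lia.
have NPv : ~ P v (lu (z + 1)%Z).
  move=> [m Hm]; have := level_eq_iter (act a) conn acyc (n := 0) Hm.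
  rewrite level_line // => Elev.
  have Ez : (z + 1 = - Z.of_nat m)%Z by lia.
  by rewrite /lu Ez line_opp // iter_chain // cu0 in Hm.
by rewrite coord_notP // level_line // -Luv; congr inl; lia.
Qed.

(** * A is a retract of a product of B and copies of E *)

Definition factor (i : option A) : alg := if i is Some _ then Ealg else B.

Definition embed (x : A) : prod_alg factor :=
  fun i => match i as i0 return factor i0 with
           | Some j => coord (act a) j x
           | None => reduce_B x
           end.

Lemma embed_hom : hom embed.
Proof.
move=> x; apply: functional_extensionality_dep => -[j|] /=.
  exact: coord_hom.
exact: reduce_B_hom.
Qed.

Lemma embed_inj : injective embed.
Proof.
move=> x y /(f_equal (fun d => d (Some x))) /= Exy.
by symmetry; apply: (@coord_eq0 _ (act a)); rewrite -Exy (@coord_P _ _ acyc _ _ 0).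
Qed.

Definition in_image (d : prod_alg factor) : Prop := exists x, embed x = d.

Definition unembed (d : prod_alg factor) : A := epsilon (inhabits a) (fun x => embed x = d).

Lemma embed_unembed d : in_image d -> embed (unembed d) = d.
Proof. exact: epsilon_spec. Qed.

Lemma unembedK x : unembed (embed x) = x.
Proof. by apply: embed_inj; apply: embed_unembed; exists x. Qed.

(* For z lying n steps below [reduce y], the point n steps below y that
   corresponds to z; when y lies in A^(infty), z is ignored. *)
Definition descend (y : A) (n : nat) (z : A) : A :=
  if excluded_middle_informative (P a y) then transport id y n z else chain y n.

Lemma id_bisim (u : A) : act (id u) = act u /\ bisim (id u) u.
Proof. by split=> //; apply: bisim_refl. Qed.

Lemma descend0 (y z : A) : descend y 0 z = y.
Proof.
rewrite /descend; case: excluded_middle_informative => // NPy.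
by have [c0 _] := chainP (notP_Ainf NPy).
Qed.

Lemma descend_act (y : A) n (z : A) : iter n.+1 act z = reduce y ->
  descend y n (act z) = act (descend y n.+1 z).
Proof.
rewrite /descend; case: excluded_middle_informative => [Py|NPy] Hz.
  by rewrite (transport_act id_bisim (bisim_sym (bisim_reduce Py)) Hz).
by have [_ cS] := chainP (notP_Ainf NPy); rewrite cS.
Qed.

(* If d enters the image of [embed] after n steps, at [embed y], then d is
   sent to the point n steps below y prescribed by its B-coordinate. *)
Definition retract (d : prod_alg factor) : A :=
  if excluded_middle_informative (hits in_image d) then
    descend (unembed (iter (hit_time in_image d) act d)) (hit_time in_image d)
      (proj1_sig (d None : B))
  else proj1_sig (d None : B).

Lemma retract_hits d : hits in_image d ->
  retract d = descend (unembed (iter (hit_time in_image d) act d)) (hit_time in_image d)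
                (proj1_sig (d None : B)).
Proof. by rewrite /retract; case: excluded_middle_informative. Qed.

Lemma retract_nohits d : ~ hits in_image d -> retract d = proj1_sig (d None : B).
Proof. by rewrite /retract; case: excluded_middle_informative. Qed.

Lemma retract_embed x : retract (embed x) = x.
Proof.
have Hx : hits in_image (embed x) by exists 0, x.
rewrite retract_hits // (@hit_time_eq _ _ _ 0) ?descend0 ?unembedK //.
by split=> [|[]] //; exists x.
Qed.

Lemma retract_hom : hom retract.
Proof.
move=> d; case: (classic (hits in_image d)) => [Hd|NHd]; last first.
  by rewrite !retract_nohits // => /hits_act.
have [Gd _] := hit_timeP Hd.
case Nd: (hit_time in_image d) Gd => [|n] Gd.
  have [y Ey] := Gd; have {Ey}<- : embed y = d := Ey.
  by rewrite -embed_hom !retract_embed.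
have [Had Nad] := hit_time_succ Hd Nd.
rewrite retract_hits // retract_hits // Nad Nd -iterSr.
apply: descend_act.
have := f_equal (fun e : prod_alg factor => proj1_sig (e None : B)) (embed_unembed Gd).
by rewrite /= iter_prod_alg iter_sub_alg => ->.
Qed.

Lemma in_R_prod : in_R (prod_alg factor) A.
Proof.
apply: (in_R_of_section (e := embed)).
- by constructor.
- exact: embed_hom.
- exact: retract_hom.
- exact: retract_embed.
Qed.

End Reduction.

Theorem lemma4p5 (A : alg) (a : A) :
  connected A ->
  (forall x : A, Aprime x <-> x = a) ->
  ~ has_cycle A ->
  ~ iso (@compl_alg A a) Zalg ->
  exists B : alg, in_R A B /\ S1 B /\ (forall X : alg, V1 A X <-> V2 B Ealg X).
Proof.
move=> conn apr acyc NZ.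
exists (B apr acyc); split; first exact: in_R_B conn apr acyc.
split; first exact: S1_B.
apply: V1_eq_V2.
- by constructor.
- by constructor; exact: a_B apr acyc.
- by constructor; exact: inl 0%Z.
- exact: V1_in_R (in_R_B conn apr acyc).
- exact: V1_in_R (in_R_E conn apr acyc NZ).
apply: (V2_in_R_prod (inhabits None)) (in_R_prod conn apr acyc).
by case=> [j|]; [right | left].
Qed.
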